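(* Let $U$ be a complete length $\mathrm{CAT}(\kappa)$ space, $\lambda\in\mathbb{R}$, $s\ge0$. Let $f_t$ and $h_t$ be two families of $\lambda$-concave functions with a common domain $\Omega\subset U\times\mathbb{R}$ (open), such that $|f_t(x)-h_t(x)|\le s$ for all $(x,t)\in\Omega$. Let $\alpha$ and $\beta$ be an $f_t$-gradient curve and an $h_t$-gradient curve, respectively, defined on a common interval $[a,b)$, and set $\ell(t)=|\alpha(t)-\beta(t)|$. Assume that for every $t\in[a,b)$ some minimizing geodesic $[\alpha(t)\beta(t)]$ lies in $\{x\in U:(x,t)\in\Omega\}$. Then at every $t$ where $\ell'(t)$ exists and $\ell(t)>0$, $\ell'(t)\le\lambda\,\ell(t)+2s/\ell(t)$, and, if $\lambda\ne0$, for all $t\in[a,b)$ $\ell(t)^2+\tfrac{2s}{\lambda}\le\bigl(\ell(a)^2+\tfrac{2s}{\lambda}\bigr)e^{2\lambda(t-a)}$. In particular, if $f_t=h_t$ (so $s=0$), then $\ell(t)\le\ell(a)\,e^{\lambda(t-a)}$ for all $t\in[a,b)$.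
   Context: A function $f$ is $\lambda$-concave if $s\mapsto f(\sigma(s))-\tfrac\lambda2 s^2$ is concave along every unit-speed geodesic $\sigma$ in its domain; a family $f_t$ is $\lambda$-concave if each $f_t$ is. For $q\in U$, $T_q$ is the tangent cone, $\uparrow_q^p\in T_q$ the unit direction of a geodesic $[qp]$, and $d_qf(\uparrow_q^p)$ the right derivative at $0$ of $f$ along the unit-speed geodesic from $q$ to $p$. Given functions $f_t$ on open sets $\mathrm{Dom}f_t$ with $\{(x,t):x\in\mathrm{Dom}f_t\}$ open, a Lipschitz curve $\alpha$ is an $f_t$-gradient curve if for every point $p$ and time $t$ for which a geodesic $[\alpha(t)\,p]$ exists, $|p-\alpha(t+\epsilon)|\le|p-\alpha(t)|-\epsilon\cdot d_{\alpha(t)}f_t(\uparrow_{\alpha(t)}^p)+o(\epsilon)$ as $\epsilon\to0^+$. *)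

From Stdlib Require Import Reals Lra Sorting.Sorted List.
Open Scope R_scope.

Section Metric.
Context {U : Type} (d : U -> U -> R).

Definition is_metric : Prop :=
  (forall x y, 0 <= d x y) /\ (forall x y, d x y = 0 <-> x = y) /\
  (forall x y, d x y = d y x) /\ (forall x y z, d x z <= d x y + d y z).

Definition complete : Prop :=
  forall u : nat -> U,
    (forall e, 0 < e -> exists N, forall m n, (N <= m)%nat -> (N <= n)%nat -> d (u m) (u n) < e) ->
    exists l, forall e, 0 < e -> exists N, forall n, (N <= n)%nat -> d (u n) l < e.

Definition curve_continuous (c : R -> U) : Prop :=
  forall s, 0 <= s <= 1 -> forall e, 0 < e -> exists del, 0 < del /\
    forall s', 0 <= s' <= 1 -> Rabs (s' - s) < del -> d (c s) (c s') < e.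

Fixpoint chain_len (c : R -> U) (x0 : R) (l : list R) : R :=
  match l with
  | nil => 0
  | x :: l' => d (c x0) (c x) + chain_len c x l'
  end.

Definition length_le (c : R -> U) (L : R) : Prop :=
  forall l : list R, Sorted Rle (0 :: l) -> Forall (fun x => x <= 1) l ->
    chain_len c 0 l <= L.

Definition length_space : Prop :=
  forall x y e, 0 < e -> exists c : R -> U,
    curve_continuous c /\ c 0 = x /\ c 1 = y /\ length_le c (d x y + e).

Definition geodesic (gamma : R -> U) (x y : U) : Prop :=
  gamma 0 = x /\ gamma (d x y) = y /\
  forall u v, 0 <= u <= d x y -> 0 <= v <= d x y -> d (gamma u) (gamma v) = Rabs (u - v).

(** distance in the model plane M^2_kappa from the vertex p~ to the point at
    distance y from q~ on the side [q~ r~], where |p~q~| = a, |p~r~| = b, |q~r~| = c *)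
Definition model_dist (kappa a b c y : R) : R :=
  if Req_EM_T c 0 then a else
  if Req_EM_T kappa 0 then
    sqrt (((c - y) * a ^ 2 + y * b ^ 2) / c - y * (c - y))
  else if Rlt_dec 0 kappa then
    let k := sqrt kappa in
    acos ((cos (k * a) * sin (k * (c - y)) + cos (k * b) * sin (k * y)) / sin (k * c)) / k
  else
    let k := sqrt (- kappa) in
    let z := (cosh (k * a) * sinh (k * (c - y)) + cosh (k * b) * sinh (k * y)) / sinh (k * c) in
    ln (z + sqrt (z ^ 2 - 1)) / k.

(** L < varpi_kappa  (varpi_kappa = pi / sqrt kappa if kappa > 0, +infinity otherwise) *)
Definition lt_varpi (kappa L : R) : Prop := kappa <= 0 \/ sqrt kappa * L < PI.

(** CAT(kappa): points at distance < varpi_kappa are joined by a geodesic, and every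
    geodesic triangle of perimeter < 2 varpi_kappa satisfies the point-on-side comparison *)
Definition CAT (kappa : R) : Prop :=
  (forall x y, lt_varpi kappa (d x y) -> exists g, geodesic g x y) /\
  (forall p q r g, geodesic g q r ->
     lt_varpi kappa ((d p q + d q r + d r p) / 2) ->
     forall y, 0 <= y <= d q r ->
       d p (g y) <= model_dist kappa (d p q) (d p r) (d q r) y).

Definition open_UR (Om : U -> R -> Prop) : Prop :=
  forall x t, Om x t -> exists r, 0 < r /\
    forall y s, d x y < r -> Rabs (s - t) < r -> Om y s.

Definition lambda_concave (lam : R) (f : U -> R) (D : U -> Prop) : Prop :=
  forall (sigma : R -> U) (u0 u1 : R),
    (forall u v, u0 <= u <= u1 -> u0 <= v <= u1 -> d (sigma u) (sigma v) = Rabs (u - v)) ->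
    (forall u, u0 <= u <= u1 -> D (sigma u)) ->
    forall x y th, u0 <= x <= u1 -> u0 <= y <= u1 -> 0 <= th <= 1 ->
      th * (f (sigma x) - lam / 2 * x ^ 2) + (1 - th) * (f (sigma y) - lam / 2 * y ^ 2)
      <= f (sigma (th * x + (1 - th) * y)) - lam / 2 * (th * x + (1 - th) * y) ^ 2.

(** family f_t, with Dom f_t = {x | Om x t}, is lambda-concave *)
Definition family_lambda_concave (lam : R) (f : R -> U -> R) (Om : U -> R -> Prop) : Prop :=
  forall t, lambda_concave lam (f t) (fun x => Om x t).

Definition right_deriv0 (F : R -> R) (L D : R) : Prop :=
  forall e, 0 < e -> exists del, 0 < del /\
    forall h, 0 < h -> h < del -> h <= L -> Rabs ((F h - F 0) / h - D) < e.

Definition gradient_curve (f : R -> U -> R) (Om : U -> R -> Prop)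
    (alpha : R -> U) (a b : R) : Prop :=
  (exists K, forall u v, a <= u < b -> a <= v < b -> d (alpha u) (alpha v) <= K * Rabs (u - v)) /\
  (forall t, a <= t < b -> Om (alpha t) t) /\
  (forall t p gamma, a <= t < b -> 0 < d (alpha t) p -> geodesic gamma (alpha t) p ->
     exists D, right_deriv0 (fun u => f t (gamma u)) (d (alpha t) p) D /\
       forall e, 0 < e -> exists del, 0 < del /\
         forall eps, 0 < eps -> eps < del -> t + eps < b ->
           d p (alpha (t + eps)) <= d p (alpha t) - eps * D + e * eps).

End Metric.

Definition deriv_within_Ico (g : R -> R) (a b t D : R) : Prop :=
  forall e, 0 < e -> exists del, 0 < del /\
    forall h, h <> 0 -> Rabs h < del -> a <= t + h < b ->
      Rabs ((g (t + h) - g t) / h - D) < e.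

(* The distance [l] between the two gradient curves is controlled through the
   midpoint [m] of a geodesic [alpha t, beta t] of length [L]: by the
   gradient-curve inequality each curve approaches [m] at least as fast as the
   initial slope of [f_t] (resp. [h_t]) along the geodesic, and lambda-concavity
   makes that slope at least the chord slope minus [lam L / 2].  The two chord
   slopes differ by at most [2 s / L], so the upper right Dini derivative of [l]
   is at most [lam l + 2 s / l]; hence that of [l^2 + 2s/lam] is at most
   [2 lam (l^2 + 2s/lam)], and a Dini-derivative form of Gronwall's lemma gives
   the exponential bound. *)

From Stdlib Require Import Reals Lra Classical_Prop.
Open Scope R_scope.

Lemma Rabs_le_cases (x y : R) : Rabs x <= y -> - y <= x <= y.
Proof. intros H; pose proof (Rle_abs x); pose proof (Rle_abs (- x)); rewrite Rabs_Ropp in *; lra. Qed.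

Definition right_dini_le (g : R -> R) (b t D : R) : Prop :=
  forall e, 0 < e -> exists del, 0 < del /\
    forall eps, 0 < eps -> eps < del -> t + eps < b ->
      g (t + eps) <= g t + eps * D + e * eps.

Lemma right_dini_le_weaken (g : R -> R) (b t D D' : R) :
  D <= D' -> right_dini_le g b t D -> right_dini_le g b t D'.
Proof.
  intros HD Hg e He; destruct (Hg e He) as [del [Hdel H]].
  exists del; split; auto; intros eps H1 H2 H3.
  specialize (H eps H1 H2 H3); nra.
Qed.

Lemma right_dini_le_shrink (g : R -> R) (b b' t D : R) :
  b' <= b -> right_dini_le g b t D -> right_dini_le g b' t D.
Proof.
  intros Hb Hg e He; destruct (Hg e He) as [del [Hdel H]].
  exists del; split; auto; intros eps H1 H2 H3; apply H; lra.
Qed.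

Lemma right_dini_le_const (m b t : R) : right_dini_le (fun _ => m) b t 0.
Proof. intros e He; exists 1; split; [lra|]; intros eps H1 _ _; nra. Qed.

Lemma right_dini_le_add (g1 g2 : R -> R) (b t D1 D2 : R) :
  right_dini_le g1 b t D1 -> right_dini_le g2 b t D2 ->
  right_dini_le (fun x => g1 x + g2 x) b t (D1 + D2).
Proof.
  intros H1 H2 e He.
  destruct (H1 (e / 2)) as [d1 [Hd1 H1']]; [lra|].
  destruct (H2 (e / 2)) as [d2 [Hd2 H2']]; [lra|].
  exists (Rmin d1 d2); split; [apply Rmin_pos; auto|].
  intros eps He0 Hed Hb.
  specialize (H1' eps He0 (Rlt_le_trans _ _ _ Hed (Rmin_l _ _)) Hb).
  specialize (H2' eps He0 (Rlt_le_trans _ _ _ Hed (Rmin_r _ _)) Hb).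
  lra.
Qed.

Lemma right_dini_le_of_le (g G : R -> R) (b t D : R) :
  (forall u, t < u < b -> g u <= G u) -> g t = G t ->
  right_dini_le G b t D -> right_dini_le g b t D.
Proof.
  intros Hle Ht HG e He; destruct (HG e He) as [del [Hdel H]].
  exists del; split; auto; intros eps H1 H2 H3.
  rewrite Ht; specialize (H eps H1 H2 H3); specialize (Hle (t + eps)); lra.
Qed.

Lemma right_dini_le_of_lipschitz (g : R -> R) (b t K : R) :
  (forall u, t < u < b -> g u - g t <= K * (u - t)) -> right_dini_le g b t K.
Proof.
  intros HK e He; exists 1; split; [lra|]; intros eps H1 _ H3.
  specialize (HK (t + eps) ltac:(lra)); replace (t + eps - t) with eps in HK by ring; nra.
Qed.

Lemma right_dini_le_sqr (g : R -> R) (b t D : R) :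
  (forall u, t <= u < b -> 0 <= g u) -> t < b -> right_dini_le g b t D ->
  right_dini_le (fun x => g x ^ 2) b t (2 * g t * D).
Proof.
  intros Hpos Htb Hg e He.
  assert (Hgt := Hpos t ltac:(lra)).
  set (eta := e / (4 * (g t + 1))).
  assert (Heta : 0 < eta) by (apply Rdiv_lt_0_compat; lra).
  assert (Heta_gt : 2 * g t * eta <= e / 2).
  { assert (Heq : eta * (4 * (g t + 1)) = e) by (unfold eta; field; lra).
    assert (g t * eta <= (g t + 1) * eta) by (apply Rmult_le_compat_r; lra). lra. }
  destruct (Hg eta Heta) as [d1 [Hd1 H1]].
  set (B := (D + eta) ^ 2 + 1).
  assert (HB : 0 < B) by (unfold B; pose proof (pow2_ge_0 (D + eta)); lra).
  exists (Rmin d1 (e / (2 * B))); split.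
  { apply Rmin_pos; auto; apply Rdiv_lt_0_compat; lra. }
  intros eps He0 Hed Hb.
  specialize (H1 eps He0 (Rlt_le_trans _ _ _ Hed (Rmin_l _ _)) Hb).
  assert (Heps : eps * B <= e / 2).
  { assert (Hq := Rlt_le_trans _ _ _ Hed (Rmin_r _ _)).
    apply Rmult_lt_compat_r with (r := B) in Hq; [|lra].
    replace (e / (2 * B) * B) with (e / 2) in Hq by (field; lra); lra. }
  assert (Hsq : g (t + eps) ^ 2 <= (g t + eps * (D + eta)) ^ 2).
  { pose proof (Hpos (t + eps) ltac:(lra)). apply pow_incr; lra. }
  assert (Hrest : eps * eps * (D + eta) ^ 2 <= eps * (e / 2)).
  { apply Rle_trans with (eps * (eps * B)); [unfold B; nra|]. apply Rmult_le_compat_l; lra. }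
  nra.
Qed.

Lemma right_dini_le_mul (v w : R -> R) (b t D w' : R) :
  (forall u, t < u < b -> 0 < w u) -> derivable_pt_lim w t w' ->
  right_dini_le v b t D ->
  right_dini_le (fun x => v x * w x) b t (D * w t + v t * w').
Proof.
  intros Hw Hw' Hv e He.
  set (M := Rabs (v t) + Rabs (w t) + (Rabs D + 1) * (Rabs w' + 1) + 1).
  assert (HM : 1 <= M).
  { unfold M; pose proof (Rabs_pos (v t)); pose proof (Rabs_pos (w t));
      pose proof (Rabs_pos D); pose proof (Rabs_pos w'); nra. }
  set (eta := Rmin 1 (e / M)).
  assert (Heta : 0 < eta) by (apply Rmin_pos; [lra | apply Rdiv_lt_0_compat; lra]).
  assert (HetaM : eta * M <= e).
  { apply Rle_trans with (e / M * M); [apply Rmult_le_compat_r; [lra | apply Rmin_r]|].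
    right; field; lra. }
  destruct (Hv eta Heta) as [d1 [Hd1 H1]].
  destruct (Hw' eta Heta) as [d2 H2].
  exists (Rmin eta (Rmin d1 d2)); split; [apply Rmin_pos; [lra | apply Rmin_pos; [lra | apply cond_pos]]|].
  intros eps He0 Hed Hb.
  assert (Heps1 : eps < eta) by (eapply Rlt_le_trans; [apply Hed | apply Rmin_l]).
  assert (Heps2 : eps < d1) by (eapply Rlt_le_trans; [apply Hed | eapply Rle_trans; [apply Rmin_r | apply Rmin_l]]).
  assert (Heps3 : eps < d2) by (eapply Rlt_le_trans; [apply Hed | eapply Rle_trans; [apply Rmin_r | apply Rmin_r]]).
  assert (Heta1 : eta <= 1) by apply Rmin_l.
  specialize (H1 eps He0 Heps2 Hb).
  specialize (H2 eps ltac:(lra) ltac:(rewrite Rabs_right; lra)).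
  set (r := w (t + eps) - w t - eps * w').
  assert (Hr : Rabs r <= eta * eps).
  { replace r with (eps * ((w (t + eps) - w t) / eps - w')) by (unfold r; field; lra).
    rewrite Rabs_mult, Rabs_right by lra; nra. }
  assert (Hprod : v (t + eps) * w (t + eps) <= (v t + eps * (D + eta)) * (w t + eps * w' + r)).
  { replace (w t + eps * w' + r) with (w (t + eps)) by (unfold r; ring).
    apply Rmult_le_compat_r; [left; apply Hw; lra | lra]. }
  assert (E1 : v t * r <= Rabs (v t) * (eta * eps)).
  { eapply Rle_trans; [apply Rle_abs|]; rewrite Rabs_mult; apply Rmult_le_compat_l; [apply Rabs_pos | auto]. }
  assert (E2 : eps * eta * w t <= eps * eta * Rabs (w t)).
  { apply Rmult_le_compat_l; [nra | apply Rle_abs]. }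
  assert (E3 : (D + eta) * (eps * w' + r) <= (Rabs D + 1) * ((Rabs w' + 1) * eta)).
  { eapply Rle_trans; [apply Rle_abs|]; rewrite Rabs_mult.
    apply Rmult_le_compat; try apply Rabs_pos.
    - eapply Rle_trans; [apply Rabs_triang|]; rewrite (Rabs_right eta) by lra; lra.
    - eapply Rle_trans; [apply Rabs_triang|]; rewrite Rabs_mult, (Rabs_right eps) by lra.
      pose proof (Rabs_pos w'); nra. }
  assert (Hexcess : v t * r + eps * eta * w t + eps * ((D + eta) * (eps * w' + r)) <= eps * (eta * M)).
  { unfold M; nra. }
  nra.
Qed.

Lemma continuous_induction (P : R -> Prop) (a t0 : R) :
  a <= t0 -> P a ->
  (forall x, a < x <= t0 -> (forall y, a <= y < x -> P y) -> P x) ->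
  (forall x, a <= x < t0 -> P x ->
     exists del, 0 < del /\ forall y, x < y < x + del -> P y) ->
  forall x, a <= x <= t0 -> P x.
Proof.
  intros Ht0 Pa Hclosed Hopen.
  set (E := fun x => a <= x <= t0 /\ forall y, a <= y <= x -> P y).
  assert (Ea : E a) by (split; [lra | intros y Hy; replace y with a by lra; auto]).
  destruct (completeness E) as [c [Hub Hlub]].
  { exists t0; intros x [Hx _]; lra. }
  { exists a; auto. }
  assert (Hac : a <= c) by (apply Hub, Ea).
  assert (Hct : c <= t0) by (apply Hlub; intros x [Hx _]; lra).
  assert (Hbelow : forall y, a <= y < c -> P y).
  { intros y Hy; destruct (classic (exists x, E x /\ y <= x)) as [[x [[_ Hx] Hyx]] | Hn].
    - apply Hx; lra.
    - exfalso; assert (c <= y) by (apply Hlub; intros x Ex; apply Rnot_lt_le; intros Hyx;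
        apply Hn; exists x; split; [auto | lra]).
      lra. }
  assert (Hupto : forall y, a <= y <= c -> P y).
  { intros y Hy; destruct (Rle_lt_or_eq_dec y c) as [Hlt | ->]; [lra | apply Hbelow; lra |].
    destruct (Rle_lt_or_eq_dec a c Hac) as [Hlt | <-]; [apply Hclosed; auto; lra | auto]. }
  destruct (Rle_lt_or_eq_dec c t0 Hct) as [Hlt | <-]; [| intros x Hx; apply Hupto; lra].
  exfalso.
  destruct (Hopen c ltac:(lra) (Hupto c ltac:(lra))) as [del [Hdel Hstep]].
  set (x' := c + Rmin (del / 2) (t0 - c)).
  assert (Hx' : c < x' <= t0) by (unfold x'; pose proof (Rmin_r (del / 2) (t0 - c));
    assert (0 < Rmin (del / 2) (t0 - c)) by (apply Rmin_pos; lra); lra).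
  assert (Ex' : E x').
  { split; [lra|]; intros y Hy; destruct (Rle_or_lt y c); [apply Hupto; lra|].
    apply Hstep; split; [lra|]; unfold x' in Hy; pose proof (Rmin_l (del / 2) (t0 - c)); lra. }
  specialize (Hub x' Ex'); lra.
Qed.

Lemma continuity_pt_lt (g : R -> R) (x e : R) :
  continuity_pt g x -> 0 < e ->
  exists del, 0 < del /\ forall y, Rabs (y - x) < del -> Rabs (g y - g x) < e.
Proof.
  intros Hg He; destruct (Hg e He) as [del [Hdel Hy]].
  exists del; split; auto; intros y Hyx.
  destruct (Req_dec y x) as [-> | Hne]; [rewrite Rminus_diag, Rabs_R0; auto|].
  apply (Hy y); split; [split; auto | exact Hyx]; unfold no_cond; auto.
Qed.

Lemma nonincreasing_of_right_dini_nonpos (G : R -> R) (a t0 : R) :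
  a <= t0 ->
  (forall x, a < x <= t0 -> continuity_pt G x) ->
  (forall t, a <= t < t0 -> right_dini_le G t0 t 0) ->
  G t0 <= G a.
Proof.
  intros Ht0 Hc Hd.
  assert (Hslack : forall e, 0 < e -> G t0 <= G a + e * (t0 - a)).
  { intros e He.
    apply (continuous_induction (fun y => G y <= G a + e * (y - a)) a t0); try lra.
    - intros x Hx Hbelow; apply Rnot_lt_le; intros Hgap.
      destruct (continuity_pt_lt G x (G x - (G a + e * (x - a))) (Hc x Hx)) as [del [Hdel Hy]]; [lra|].
      set (y := Rmax a (x - del / 2)).
      assert (Hya : a <= y) by apply Rmax_l.
      assert (Hyx : y < x) by (apply Rmax_lub_lt; lra).
      assert (Hyd : x - del / 2 <= y) by apply Rmax_r.
      specialize (Hy y ltac:(rewrite Rabs_left; lra)); apply Rabs_def2 in Hy.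
      specialize (Hbelow y (conj Hya Hyx)); nra.
    - intros x Hx Px; destruct (Hd x Hx e He) as [del [Hdel Hstep]].
      exists (Rmin del (t0 - x)); split; [apply Rmin_pos; lra|].
      intros y Hy; pose proof (Rmin_l del (t0 - x)); pose proof (Rmin_r del (t0 - x)).
      specialize (Hstep (y - x) ltac:(lra) ltac:(lra) ltac:(lra)).
      replace (x + (y - x)) with y in Hstep by ring; lra. }
  destruct (Rle_lt_or_eq_dec a t0 Ht0) as [Hlt | <-]; [|lra].
  apply Rnot_lt_le; intros Hgt.
  specialize (Hslack ((G t0 - G a) / (2 * (t0 - a))) ltac:(apply Rdiv_lt_0_compat; lra)).
  replace ((G t0 - G a) / (2 * (t0 - a)) * (t0 - a)) with ((G t0 - G a) / 2) in Hslack by (field; lra).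
  lra.
Qed.

Lemma derivable_pt_lim_exp_affine (c a x : R) :
  derivable_pt_lim (fun y => exp (c * (y - a))) x (c * exp (c * (x - a))).
Proof.
  assert (Haff : derivable_pt_lim (fun y => c * (y - a)) x c).
  { apply derivable_pt_lim_ext with (f := mult_real_fct c (id - fct_cte a)%F); [reflexivity|].
    replace c with (c * (1 - 0)) at 2 by ring.
    apply derivable_pt_lim_scal, derivable_pt_lim_minus;
      [apply derivable_pt_lim_id | apply derivable_pt_lim_const]. }
  rewrite Rmult_comm; apply (derivable_pt_lim_comp (fun y => c * (y - a)) exp), derivable_pt_lim_exp; auto.
Qed.

Lemma right_dini_gronwall (v : R -> R) (c a t0 : R) :
  a <= t0 ->
  (forall x, a < x <= t0 -> continuity_pt v x) ->
  (forall t, a <= t < t0 -> right_dini_le v t0 t (c * v t)) ->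
  v t0 <= v a * exp (c * (t0 - a)).
Proof.
  intros Ht0 Hc Hd.
  set (G := fun x => v x * exp (- c * (x - a))).
  assert (HG : G t0 <= G a).
  { apply nonincreasing_of_right_dini_nonpos; auto.
    - intros x Hx; apply continuity_pt_mult; [auto|].
      apply derivable_continuous_pt; eexists; apply derivable_pt_lim_exp_affine.
    - intros t Ht; apply right_dini_le_weaken with
        (D := c * v t * exp (- c * (t - a)) + v t * (- c * exp (- c * (t - a)))); [right; ring|].
      apply (right_dini_le_mul v (fun x => exp (- c * (x - a)))); auto.
      + intros u _; apply exp_pos.
      + apply derivable_pt_lim_exp_affine. }
  unfold G in HG; replace (- c * (a - a)) with 0 in HG by ring; rewrite exp_0, Rmult_1_r in HG.
  apply Rmult_le_compat_r with (r := exp (c * (t0 - a))) in HG; [|left; apply exp_pos].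
  rewrite Rmult_assoc, <- exp_plus in HG.
  replace (- c * (t0 - a) + c * (t0 - a)) with 0 in HG by ring; rewrite exp_0, Rmult_1_r in HG; auto.
Qed.

Lemma deriv_le_of_right_dini_le (g : R -> R) (a b t D D' : R) :
  a <= t < b -> deriv_within_Ico g a b t D -> right_dini_le g b t D' -> D <= D'.
Proof.
  intros Ht Hder Hd; apply Rnot_lt_le; intros HD.
  set (e := (D - D') / 2).
  destruct (Hd e ltac:(unfold e; lra)) as [d1 [Hd1 H1]].
  destruct (Hder e ltac:(unfold e; lra)) as [d2 [Hd2 H2]].
  set (eps := Rmin d1 (Rmin d2 (b - t)) / 2).
  assert (Hm : 0 < Rmin d1 (Rmin d2 (b - t))) by (repeat apply Rmin_pos; lra).
  pose proof (Rmin_l d1 (Rmin d2 (b - t))).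
  pose proof (Rmin_l d2 (b - t)); pose proof (Rmin_r d2 (b - t)); pose proof (Rmin_r d1 (Rmin d2 (b - t))).
  assert (Heps : 0 < eps) by (unfold eps; lra).
  specialize (H1 eps Heps ltac:(unfold eps; lra) ltac:(unfold eps; lra)).
  specialize (H2 eps ltac:(lra) ltac:(rewrite Rabs_right; unfold eps; lra) ltac:(unfold eps; lra)).
  apply Rabs_def2 in H2.
  assert (Hq : (g (t + eps) - g t) / eps <= D' + e).
  { apply Rmult_le_reg_r with eps; auto. unfold Rdiv; rewrite Rmult_assoc, Rinv_l, Rmult_1_r by lra. lra. }
  unfold e in *; lra.
Qed.

Lemma continuity_pt_of_lipschitz_on (g : R -> R) (a b K x : R) :
  0 <= K -> (forall u v, a <= u < b -> a <= v < b -> Rabs (g u - g v) <= K * Rabs (u - v)) ->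
  a < x < b -> continuity_pt g x.
Proof.
  intros HK Hlip Hx e He.
  exists (Rmin (e / (K + 1)) (Rmin (x - a) (b - x))); split.
  { repeat apply Rmin_pos; try lra; apply Rdiv_lt_0_compat; lra. }
  intros y [_ Hy]; simpl in *; unfold R_dist in *.
  pose proof (Rmin_l (e / (K + 1)) (Rmin (x - a) (b - x))).
  pose proof (Rmin_r (e / (K + 1)) (Rmin (x - a) (b - x))).
  pose proof (Rmin_l (x - a) (b - x)); pose proof (Rmin_r (x - a) (b - x)).
  assert (Hyx : Rabs (y - x) < Rmin (x - a) (b - x)) by lra; apply Rabs_def2 in Hyx.
  eapply Rle_lt_trans; [apply Hlip; lra|].
  apply Rle_lt_trans with ((K + 1) * Rabs (y - x)); [apply Rmult_le_compat_r; [apply Rabs_pos | lra]|].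
  apply Rlt_le_trans with ((K + 1) * (e / (K + 1))); [apply Rmult_lt_compat_l; lra|].
  right; field; lra.
Qed.

Definition lambda_concave_Icc (lam L : R) (F : R -> R) : Prop :=
  forall x y th, 0 <= x <= L -> 0 <= y <= L -> 0 <= th <= 1 ->
    th * (F x - lam / 2 * x ^ 2) + (1 - th) * (F y - lam / 2 * y ^ 2)
    <= F (th * x + (1 - th) * y) - lam / 2 * (th * x + (1 - th) * y) ^ 2.

(* Compare the chord slope of [F - lam/2 u^2] on [0, L] with the one on [0, h]
   for small [h], then let [h] go to [0]. *)
Lemma lambda_concave_slope_le_right_deriv (lam L M D : R) (F : R -> R) :
  0 < L -> 0 < M -> lambda_concave_Icc lam L F -> right_deriv0 F M D ->
  (F L - F 0) / L - lam * L / 2 <= D.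
Proof.
  intros HL HM Hc Hd.
  set (S := (F L - F 0) / L).
  apply Rnot_lt_le; intros Hgt.
  set (g := S - lam * L / 2 - D).
  assert (Hg : 0 < g) by (unfold g; lra).
  destruct (Hd (g / 2)) as [del [Hdel Hh]]; [lra|].
  set (q := g / (2 * (Rabs lam + 1))).
  assert (Hla := Rabs_pos lam).
  assert (Hq : 0 < q) by (apply Rdiv_lt_0_compat; lra).
  set (h := Rmin (Rmin (del / 2) M) (Rmin L q)).
  assert (H0 : 0 < h) by (repeat apply Rmin_pos; lra).
  assert (Hhd : h <= del / 2) by (eapply Rle_trans; [apply Rmin_l | apply Rmin_l]).
  assert (HhM : h <= M) by (eapply Rle_trans; [apply Rmin_l | apply Rmin_r]).
  assert (HhL : h <= L) by (eapply Rle_trans; [apply Rmin_r | apply Rmin_l]).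
  assert (Hhq : h <= q) by (eapply Rle_trans; [apply Rmin_r | apply Rmin_r]).
  specialize (Hh h H0 ltac:(lra) HhM); apply Rabs_def2 in Hh.
  set (sh := (F h - F 0) / h) in Hh.
  assert (HFh : F h = F 0 + sh * h) by (unfold sh; field; lra).
  assert (HFL : F L = F 0 + S * L) by (unfold S; field; lra).
  assert (Hth : 0 <= h / L <= 1).
  { split; [apply Rmult_le_pos; [lra | left; apply Rinv_0_lt_compat; lra]|].
    apply Rmult_le_reg_r with L; auto; unfold Rdiv; rewrite Rmult_assoc, Rinv_l; lra. }
  specialize (Hc L 0 (h / L) ltac:(lra) ltac:(lra) Hth).
  replace (h / L * L + (1 - h / L) * 0) with h in Hc by (field; lra).
  rewrite HFh, HFL in Hc.
  assert (Hslope : h * (S - lam * L / 2 + lam * h / 2) <= h * sh).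
  { replace (h * (S - lam * L / 2 + lam * h / 2)) with
      (h / L * (F 0 + S * L - lam / 2 * L ^ 2) + (1 - h / L) * (F 0 - lam / 2 * 0 ^ 2)
       - F 0 + lam / 2 * h ^ 2) by (field; lra).
    lra. }
  apply Rmult_le_reg_l in Hslope; auto.
  assert (Hlh : Rabs lam * h <= g / 2).
  { apply Rle_trans with ((Rabs lam + 1) * q); [nra|].
    right; unfold q; field; lra. }
  assert (- (Rabs lam * h) <= lam * h) by (pose proof (Rle_abs (- lam)); rewrite Rabs_Ropp in *; nra).
  unfold g in *; lra.
Qed.

Section MetricSpace.

Variables (U : Type) (d : U -> U -> R).
Hypothesis metric_d : is_metric d.

Lemma geodesic_dist_from_start (g : R -> U) (x y : U) (u : R) :
  geodesic d g x y -> 0 <= u <= d x y -> d x (g u) = u.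
Proof.
  intros [Hg0 [_ Hiso]] Hu; rewrite <- Hg0, Hiso by lra.
  rewrite Rabs_left1 by lra; ring.
Qed.

Lemma geodesic_initial_segment (g : R -> U) (x y : U) (r : R) :
  geodesic d g x y -> 0 <= r <= d x y -> geodesic d g x (g r).
Proof.
  intros Hg Hr; pose proof (geodesic_dist_from_start g x y r Hg Hr) as Hdr.
  destruct Hg as [Hg0 [_ Hiso]].
  split; [auto|]; rewrite Hdr; split; [auto|].
  intros u v Hu Hv; apply Hiso; lra.
Qed.

Lemma geodesic_reverse (g : R -> U) (x y : U) :
  geodesic d g x y -> geodesic d (fun u => g (d x y - u)) y x.
Proof.
  destruct metric_d as [_ [_ [Hsym _]]].
  intros [Hg0 [HgL Hiso]]; unfold geodesic; rewrite (Hsym y x).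
  split; [rewrite Rminus_0_r; auto|]; split; [rewrite Rminus_diag; auto|].
  intros u v Hu Hv; rewrite Hiso by lra.
  replace (d x y - u - (d x y - v)) with (v - u) by ring; apply Rabs_minus_sym.
Qed.

Lemma lambda_concave_along_geodesic (lam : R) (f : U -> R) (D : U -> Prop) (g : R -> U) (x y : U) :
  lambda_concave d lam f D -> geodesic d g x y -> (forall u, 0 <= u <= d x y -> D (g u)) ->
  lambda_concave_Icc lam (d x y) (fun u => f (g u)).
Proof.
  intros Hf [_ [_ Hiso]] HD u v th Hu Hv Hth.
  apply (Hf g 0 (d x y)); auto.
Qed.

Lemma dist_dist_le (x y x' y' : U) : Rabs (d x y - d x' y') <= d x x' + d y y'.
Proof.
  destruct metric_d as [_ [_ [Hsym Htri]]].
  pose proof (Htri x x' y); pose proof (Htri x' y' y); pose proof (Htri x' x y'); pose proof (Htri x y y').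
  rewrite (Hsym x' x) in *; rewrite (Hsym y' y) in *; apply Rabs_le; lra.
Qed.

End MetricSpace.


Section GradientCurves.

Variables (U : Type) (d : U -> U -> R) (Om : U -> R -> Prop) (lam a b : R).
Hypothesis metric_d : is_metric d.

Lemma gradient_curve_dist_right_dini (f : R -> U -> R) (alpha : R -> U) (t : R) (q : U) (g : R -> U) (r : R) :
  family_lambda_concave d lam f Om -> gradient_curve d f Om alpha a b -> a <= t < b ->
  geodesic d g (alpha t) q -> (forall u, 0 <= u <= d (alpha t) q -> Om (g u) t) ->
  0 < r <= d (alpha t) q ->
  right_dini_le (fun u => d (g r) (alpha u)) b t
    (lam * d (alpha t) q / 2 - (f t q - f t (alpha t)) / d (alpha t) q).
Proof.
  intros Hf [_ [_ Hgrad]] Ht Hg HOm Hr.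
  assert (Hdr := geodesic_dist_from_start U d g (alpha t) q r Hg ltac:(lra)).
  destruct (Hgrad t (g r) g Ht ltac:(lra) (geodesic_initial_segment U d g (alpha t) q r Hg ltac:(lra)))
    as [D [HD Hdist]].
  rewrite Hdr in HD.
  assert (Hslope := lambda_concave_slope_le_right_deriv lam (d (alpha t) q) r D (fun u => f t (g u))
    ltac:(lra) ltac:(lra) (lambda_concave_along_geodesic U d lam (f t) _ g _ _ (Hf t) Hg HOm) HD).
  destruct Hg as [Hg0 [HgL _]]; simpl in Hslope; rewrite Hg0, HgL in Hslope.
  apply right_dini_le_weaken with (D := - D); [lra|].
  intros e He; destruct (Hdist e He) as [del [Hdel H]].
  exists del; split; auto; intros eps H1 H2 H3; specialize (H eps H1 H2 H3); lra.
Qed.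

Variables (s : R) (f h : R -> U -> R) (alpha beta : R -> U).
Hypotheses (concave_f : family_lambda_concave d lam f Om)
  (concave_h : family_lambda_concave d lam h Om)
  (close_fh : forall x t, Om x t -> Rabs (f t x - h t x) <= s)
  (grad_alpha : gradient_curve d f Om alpha a b)
  (grad_beta : gradient_curve d h Om beta a b)
  (geodesic_in_Om : forall t, a <= t < b -> exists gamma, geodesic d gamma (alpha t) (beta t) /\
      forall u, 0 <= u <= d (alpha t) (beta t) -> Om (gamma u) t).

Lemma dist_gradient_curves_right_dini (t : R) :
  a <= t < b -> 0 < d (alpha t) (beta t) ->
  right_dini_le (fun u => d (alpha u) (beta u)) b t
    (lam * d (alpha t) (beta t) + 2 * s / d (alpha t) (beta t)).
Proof.
  pose proof metric_d as [_ [_ [Hsym Htri]]].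
  intros Ht HL; destruct (geodesic_in_Om t Ht) as [g [Hg HOm]].
  set (L := d (alpha t) (beta t)) in *.
  set (m := g (L / 2)).
  assert (Hrev := geodesic_reverse U d metric_d g _ _ Hg); fold L in Hrev.
  assert (HLrev : d (beta t) (alpha t) = L) by apply Hsym.
  assert (Ha := gradient_curve_dist_right_dini f alpha t (beta t) g (L / 2)
    concave_f grad_alpha Ht Hg HOm ltac:(fold L; lra)).
  assert (Hb := gradient_curve_dist_right_dini h beta t (alpha t) _ (L / 2)
    concave_h grad_beta Ht Hrev ltac:(intros u Hu; apply HOm; lra) ltac:(lra)).
  rewrite HLrev in Hb; replace (L - L / 2) with (L / 2) in Hb by field; fold L m in Ha, Hb.
  assert (Hma : d m (alpha t) = L / 2).
  { rewrite Hsym; apply (geodesic_dist_from_start U d g _ (beta t)); auto; fold L; lra. }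
  assert (Hmb : d m (beta t) = L / 2).
  { rewrite Hsym; unfold m; replace (L / 2) with (L - L / 2) at 1 by field.
    rewrite (geodesic_dist_from_start U d _ _ (alpha t) (L / 2) Hrev); [field | rewrite HLrev; lra]. }
  assert (Hfa := close_fh _ _ (proj1 (proj2 grad_alpha) t Ht)).
  assert (Hfb := close_fh _ _ (proj1 (proj2 grad_beta) t Ht)).
  apply Rabs_le_cases in Hfa; apply Rabs_le_cases in Hfb.
  apply right_dini_le_of_le with (G := fun u => d m (alpha u) + d m (beta u)).
  - intros u _; rewrite (Hsym m); apply Htri.
  - rewrite Hma, Hmb; fold L; field.
  - eapply right_dini_le_weaken; [| exact (right_dini_le_add _ _ _ _ _ _ Ha Hb)].
    assert (Hdiff : - (2 * s) / L <= ((f t (beta t) - h t (beta t)) - (f t (alpha t) - h t (alpha t))) / L).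
    { apply Rmult_le_compat_r; [left; apply Rinv_0_lt_compat |]; lra. }
    replace (- (2 * s) / L) with (- (2 * s / L)) in Hdiff by (field; lra).
    replace (((f t (beta t) - h t (beta t)) - (f t (alpha t) - h t (alpha t))) / L)
      with ((f t (beta t) - f t (alpha t)) / L + (h t (alpha t) - h t (beta t)) / L) in Hdiff by (field; lra).
    lra.
Qed.

Lemma dist_gradient_curves_lipschitz :
  exists K, 0 <= K /\ forall u v, a <= u < b -> a <= v < b ->
    Rabs (d (alpha u) (beta u) - d (alpha v) (beta v)) <= K * Rabs (u - v).
Proof.
  destruct grad_alpha as [[Ka HKa] _]; destruct grad_beta as [[Kb HKb] _].
  exists (Rabs Ka + Rabs Kb); split; [pose proof (Rabs_pos Ka); pose proof (Rabs_pos Kb); lra|].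
  intros u v Hu Hv; eapply Rle_trans; [apply dist_dist_le; auto|].
  specialize (HKa u v Hu Hv); specialize (HKb u v Hu Hv).
  pose proof (Rabs_pos (u - v));
    pose proof (Rmult_le_compat_r _ _ _ (Rabs_pos (u - v)) (Rle_abs Ka));
    pose proof (Rmult_le_compat_r _ _ _ (Rabs_pos (u - v)) (Rle_abs Kb)).
  lra.
Qed.

Hypothesis s_nonneg : 0 <= s.

Lemma dist_sq_right_dini (t : R) : a <= t < b ->
  right_dini_le (fun u => d (alpha u) (beta u) ^ 2) b t
    (2 * lam * d (alpha t) (beta t) ^ 2 + 4 * s).
Proof.
  pose proof metric_d as [Hpos _].
  intros Ht; assert (Hnonneg : forall u, t <= u < b -> 0 <= d (alpha u) (beta u)) by auto.
  destruct (Rle_lt_or_eq_dec 0 _ (Hpos (alpha t) (beta t))) as [HL | HL].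
  - eapply right_dini_le_weaken;
      [| exact (right_dini_le_sqr _ _ _ _ Hnonneg ltac:(lra) (dist_gradient_curves_right_dini t Ht HL))].
    right; field; lra.
  - destruct dist_gradient_curves_lipschitz as [K [HK Hlip]].
    eapply right_dini_le_weaken;
      [| apply (right_dini_le_sqr _ _ _ K Hnonneg ltac:(lra)), right_dini_le_of_lipschitz].
    + rewrite <- HL; pose proof (pow2_ge_0 (d (alpha t) (beta t))); lra.
    + intros u Hu; specialize (Hlip u t ltac:(lra) Ht).
      rewrite (Rabs_right (u - t)) in Hlip by lra; eapply Rle_trans; [apply Rle_abs | exact Hlip].
Qed.

Lemma dist_sq_gronwall (m : R) : 2 * lam * m = 4 * s -> forall t, a <= t < b ->
  d (alpha t) (beta t) ^ 2 + m <= (d (alpha a) (beta a) ^ 2 + m) * exp (2 * lam * (t - a)).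
Proof.
  intros Hm t Ht.
  destruct dist_gradient_curves_lipschitz as [K [HK Hlip]].
  apply (right_dini_gronwall (fun u => d (alpha u) (beta u) ^ 2 + m)); [lra | |].
  - intros x Hx; apply (continuity_pt_plus (fun u => d (alpha u) (beta u) ^ 2) (fun _ => m));
      [| apply continuity_pt_const; intros ? ?; reflexivity].
    apply (continuity_pt_comp (fun u => d (alpha u) (beta u)) (fun y => y ^ 2)).
    + apply (continuity_pt_of_lipschitz_on _ a b K); auto; lra.
    + apply derivable_continuous_pt, derivable_pt_pow.
  - intros t' Ht'; apply right_dini_le_shrink with b; [lra|].
    eapply right_dini_le_weaken;
      [| exact (right_dini_le_add _ _ _ _ _ _ (dist_sq_right_dini t' ltac:(lra)) (right_dini_le_const m b t'))].
    right; lra.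
Qed.

End GradientCurves.

Theorem mainTheorem7 (U : Type) (d : U -> U -> R) (kappa lam s : R)
  (Om : U -> R -> Prop) (f h : R -> U -> R) (alpha beta : R -> U) (a b : R) :
  is_metric d -> complete d -> length_space d -> CAT d kappa ->
  0 <= s ->
  open_UR d Om ->
  family_lambda_concave d lam f Om ->
  family_lambda_concave d lam h Om ->
  (forall x t, Om x t -> Rabs (f t x - h t x) <= s) ->
  gradient_curve d f Om alpha a b ->
  gradient_curve d h Om beta a b ->
  (forall t, a <= t < b -> exists gamma, geodesic d gamma (alpha t) (beta t) /\
      forall u, 0 <= u <= d (alpha t) (beta t) -> Om (gamma u) t) ->
  let l := fun t => d (alpha t) (beta t) in
  (forall t D, a <= t < b -> deriv_within_Ico l a b t D -> 0 < l t ->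
      D <= lam * l t + 2 * s / l t) /\
  (lam <> 0 -> forall t, a <= t < b ->
      l t ^ 2 + 2 * s / lam <= (l a ^ 2 + 2 * s / lam) * exp (2 * lam * (t - a))) /\
  ((forall x t, Om x t -> f t x = h t x) -> forall t, a <= t < b ->
      l t <= l a * exp (lam * (t - a))).
Proof.
  intros Hm _ _ _ Hs _ Hcf Hch Hfh Ga Gb Hgeo l.
  split; [| split].
  - intros t D Ht Hder HL.
    exact (deriv_le_of_right_dini_le l a b t D _ Ht Hder
      (dist_gradient_curves_right_dini U d Om lam a b Hm s f h alpha beta Hcf Hch Hfh Ga Gb Hgeo t Ht HL)).
  - intros Hlam t Ht.
    apply (dist_sq_gronwall U d Om lam a b Hm s f h alpha beta Hcf Hch Hfh Ga Gb Hgeo Hs); auto.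
    field; auto.
  - intros Hfh0 t Ht.
    assert (Hclose : forall x t, Om x t -> Rabs (f t x - h t x) <= 0).
    { intros x t' Hx; rewrite Hfh0, Rminus_diag, Rabs_R0 by auto; lra. }
    assert (Hsq := dist_sq_gronwall U d Om lam a b Hm 0 f h alpha beta Hcf Hch Hclose Ga Gb Hgeo
      (Rle_refl 0) 0 ltac:(ring) t Ht).
    apply Rsqr_incr_0_var; [| apply Rmult_le_pos; [apply Hm | left; apply exp_pos]].
    replace (2 * lam * (t - a)) with (lam * (t - a) + lam * (t - a)) in Hsq by ring.
    rewrite exp_plus in Hsq; unfold Rsqr; simpl in Hsq; fold (l t) (l a) in Hsq; nra.
Qed.
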